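(* Let $q\in\mathbb C$ with $|q|=1$ and $q^2\neq 1$, and let $A,B$ be self-adjoint operators on a Hilbert space $\mathcal H$. Suppose $\lambda,\lambda q\in\rho(A)$ and $\mu,\mu q\in\rho(B)$. (i) If $\mathcal D$ is a linear subspace of $\mathcal D(AB)\cap\mathcal D(BA)$ and $ABf=qBAf$ for all $f\in\mathcal D$, then $\mathcal E:=(A-\lambda I)\mathcal D$ is a linear subspace of $\mathcal D(B)$ and $$BR_\lambda(A)g=qR_{\lambda q}(A)Bg\qquad(\ast)$$ for all $g\in\mathcal E$ (in particular $R_\lambda(A)g\in\mathcal D(B)$). (ii) If $\mathcal E$ is a linear subspace of $\mathcal D(B)$ such that $R_\lambda(A)g\in\mathcal D(B)$ and $(\ast)$ holds for all $g\in\mathcal E$, then every $f\in\mathcal D:=R_\lambda(A)\mathcal E$ lies in $\mathcal D(AB)\cap\mathcal D(BA)$ and satisfies $ABf=qBAf$. (iii) If $\mathcal E$ is a linear subspace of $\mathcal D(B)$ and $(\ast)$ holds for all $g\in\mathcal E$, then $$R_\lambda(A)R_\mu(B)h=qR_{\mu q}(B)R_{\lambda q}(A)h+\mu\lambda q(q-1)R_{\mu q}(B)R_{\lambda q}(A)R_\lambda(A)R_\mu(B)h\qquad(\ast\ast)$$ for all $h\in\mathcal F:=(B-\mu I)\mathcal E$. (iv) If $\mathcal F$ is a linear subspace of $\mathcal H$ such that $(\ast\ast)$ holds for all $h\in\mathcal F$, then $(\ast)$ holds (with $R_\lambda(A)g\in\mathcal D(B)$) for all $g\in\mathcal E:=R_\mu(B)\mathcal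 F$.
   Context: For a densely defined closed operator $T$, $\mathcal D(T)$ denotes its domain, $\rho(T)$ its resolvent set and $R_\lambda(T)=(T-\lambda I)^{-1}$ its resolvent for $\lambda\in\rho(T)$. Products of unbounded operators have their natural domains, e.g. $\mathcal D(AB)=\{f\in\mathcal D(B): Bf\in\mathcal D(A)\}$. *)

From Stdlib Require Import Reals ClassicalEpsilon.
Open Scope R_scope.

Record Cpx := mkC { Re : R; Im : R }.
Definition Czero : Cpx := mkC 0 0.
Definition Cone : Cpx := mkC 1 0.
Definition Cadd (z w : Cpx) : Cpx := mkC (Re z + Re w) (Im z + Im w).
Definition Copp (z : Cpx) : Cpx := mkC (- Re z) (- Im z).
Definition Csub (z w : Cpx) : Cpx := Cadd z (Copp w).
Definition Cmul (z w : Cpx) : Cpx :=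
  mkC (Re z * Re w - Im z * Im w) (Re z * Im w + Im z * Re w).
Definition Cconj (z : Cpx) : Cpx := mkC (Re z) (- Im z).
Definition Cabs (z : Cpx) : R := sqrt (Re z * Re z + Im z * Im z).

Record Hilbert := {
  hcar :> Type;
  hzero : hcar;
  hadd : hcar -> hcar -> hcar;
  hopp : hcar -> hcar;
  hscal : Cpx -> hcar -> hcar;
  hinner : hcar -> hcar -> Cpx;
  hadd_assoc : forall x y z, hadd x (hadd y z) = hadd (hadd x y) z;
  hadd_comm : forall x y, hadd x y = hadd y x;
  hadd_0 : forall x, hadd x hzero = x;
  hadd_opp : forall x, hadd x (hopp x) = hzero;
  hscal_1 : forall x, hscal Cone x = x;
  hscal_assoc : forall a b x, hscal a (hscal b x) = hscal (Cmul a b) x;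
  hscal_addv : forall a x y, hscal a (hadd x y) = hadd (hscal a x) (hscal a y);
  hscal_adds : forall a b x, hscal (Cadd a b) x = hadd (hscal a x) (hscal b x);
  (* inner product, linear in the first argument *)
  hinner_addl : forall x y z, hinner (hadd x y) z = Cadd (hinner x z) (hinner y z);
  hinner_scall : forall a x y, hinner (hscal a x) y = Cmul a (hinner x y);
  hinner_conj : forall x y, hinner y x = Cconj (hinner x y);
  hinner_pos : forall x, 0 <= Re (hinner x x);
  hinner_def : forall x, hinner x x = Czero -> x = hzero;
  hcomplete : forall u : nat -> hcar,
    (forall eps, 0 < eps -> exists N, forall n m, (N <= n)%nat -> (N <= m)%nat ->
        sqrt (Re (hinner (hadd (u n) (hopp (u m))) (hadd (u n) (hopp (u m))))) < eps) ->
    exists l, forall eps, 0 < eps -> exists N, forall n, (N <= n)%nat ->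
        sqrt (Re (hinner (hadd (u n) (hopp l)) (hadd (u n) (hopp l)))) < eps
}.
Arguments hzero {h}. Arguments hadd {h}. Arguments hopp {h}.
Arguments hscal {h}. Arguments hinner {h}.

Section Ops.
Context {H : Hilbert}.

Definition hsub (x y : H) : H := hadd x (hopp y).
Definition hnorm (x : H) : R := sqrt (Re (hinner x x)).

(* linear subspace (no closedness required) *)
Definition subspace (S : H -> Prop) : Prop :=
  S hzero /\ (forall x y, S x -> S y -> S (hadd x y)) /\
  (forall a x, S x -> S (hscal a x)).

Record operator := mkOp { dom : H -> Prop; app : H -> H }.

Definition linear_op (T : operator) : Prop :=
  subspace (dom T) /\
  (forall x y, dom T x -> dom T y -> app T (hadd x y) = hadd (app T x) (app T y)) /\
  (forall a x, dom T x -> app T (hscal a x) = hscal a (app T x)).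

Definition densely_defined (T : operator) : Prop :=
  forall x eps, 0 < eps -> exists y, dom T y /\ hnorm (hsub x y) < eps.

(* T equals its adjoint: D(T^adj) = {y | exists z, forall x in D(T), <Tx,y> = <x,z>}, T^adj y = z *)
Definition self_adjoint (T : operator) : Prop :=
  linear_op T /\ densely_defined T /\
  (forall y, dom T y <->
     exists z, forall x, dom T x -> hinner (app T x) y = hinner x z) /\
  (forall x y, dom T x -> dom T y -> hinner (app T x) y = hinner x (app T y)).

Definition in_resolvent_set (T : operator) (l : Cpx) : Prop :=
  (forall f1 f2, dom T f1 -> dom T f2 ->
     hsub (app T f1) (hscal l f1) = hsub (app T f2) (hscal l f2) -> f1 = f2) /\
  (forall g, exists f, dom T f /\ hsub (app T f) (hscal l f) = g) /\
  (exists M, forall f, dom T f -> hnorm f <= M * hnorm (hsub (app T f) (hscal l f))).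

(* R_l(T) g = (T - l I)^{-1} g, the unique f in D(T) with (T - l)f = g
   (meaningful when l is in the resolvent set) *)
Definition resolvent (T : operator) (l : Cpx) (g : H) : H :=
  epsilon (inhabits hzero) (fun f => dom T f /\ hsub (app T f) (hscal l f) = g).

(* natural domain of a product: D(ST) = {f in D(T) | Tf in D(S)} *)
Definition dom_comp (S T : operator) (f : H) : Prop := dom T f /\ dom S (app T f).

Definition shift_image (T : operator) (l : Cpx) (S : H -> Prop) (g : H) : Prop :=
  exists f, S f /\ g = hsub (app T f) (hscal l f).
Definition resolvent_image (T : operator) (l : Cpx) (S : H -> Prop) (f : H) : Prop :=
  exists g, S g /\ f = resolvent T l g.

Definition rel_star (A B : operator) (q l : Cpx) (g : H) : Prop :=
  dom B (resolvent A l g) /\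
  app B (resolvent A l g) = hscal q (resolvent A (Cmul l q) (app B g)).

Definition rel_star2 (A B : operator) (q l m : Cpx) (h : H) : Prop :=
  resolvent A l (resolvent B m h) =
  hadd (hscal q (resolvent B (Cmul m q) (resolvent A (Cmul l q) h)))
       (hscal (Cmul (Cmul (Cmul m l) q) (Csub q Cone))
          (resolvent B (Cmul m q) (resolvent A (Cmul l q)
             (resolvent A l (resolvent B m h))))).
End Ops.
Arguments operator : clear implicits.

(* The four statements are purely algebraic consequences of the defining
   property of a resolvent: for lambda in rho(T), R_lambda(T) g is the unique
   f in D(T) with (T - lambda I) f = g.

   Then:
   - (i)/(ii): for f in D(A), g := (A - lambda I) f satisfies R_lambda(A) g = f;
     the commutation A B f = q B A f is turned into (star) for g by applying
     R_{lambda q}(A), and conversely (star) gives back the commutation.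
   - (iii)/(iv): for any h, with g := R_mu(B) h, relation (star) for g is
     equivalent to (star-star) for h.  Indeed the right-hand side of
     (star-star) is R_{mu q}(B) Z for an explicit Z, so (star-star) says that
     p := R_lambda(A) g lies in D(B) with (B - mu q) p = Z, and by the
     resolvent identity this is exactly B p = q R_{lambda q}(A) B g. *)

From Stdlib Require Import Reals Psatz ClassicalEpsilon.
Open Scope R_scope.

Lemma Cpx_ext (z w : Cpx) : Re z = Re w -> Im z = Im w -> z = w.
Proof. destruct z, w; simpl; intros; subst; reflexivity. Qed.

Ltac Cring := apply Cpx_ext; simpl; ring.

Lemma Cmul_conj_unit (q : Cpx) : Cabs q = 1 -> Cmul q (Cconj q) = Cone.
Proof.
  intro hq.
  assert (Hq1 : Re q * Re q + Im q * Im q = 1).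
  { unfold Cabs in hq.
    rewrite <- (sqrt_sqrt (Re q * Re q + Im q * Im q)) by nra.
    rewrite hq. ring. }
  apply Cpx_ext; simpl; nra.
Qed.

Section VectorAlgebra.
Context {H : Hilbert}.

Lemma hadd_0l (x : H) : hadd hzero x = x.
Proof. rewrite hadd_comm. apply hadd_0. Qed.

Lemma hscal_0s (x : H) : hscal Czero x = hzero.
Proof.
  set (s := hscal Czero x).
  assert (Hss : hadd s s = s).
  { unfold s; rewrite <- hscal_adds. f_equal. Cring. }
  transitivity (hadd (hadd s s) (hopp s)).
  - rewrite <- hadd_assoc, hadd_opp, hadd_0. reflexivity.
  - rewrite Hss, hadd_opp. reflexivity.
Qed.

Lemma hscal_0v (a : Cpx) : hscal a (@hzero H) = hzero.
Proof.
  rewrite <- (hscal_0s hzero), hscal_assoc.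
  replace (Cmul a Czero) with Czero by Cring. reflexivity.
Qed.

Lemma hsub_scal (x y : H) : hsub x y = hadd x (hscal (Copp Cone) y).
Proof.
  unfold hsub; f_equal.
  assert (Hy : hadd y (hscal (Copp Cone) y) = hzero).
  { rewrite <- (hscal_1 _ y) at 1.
    rewrite <- hscal_adds. replace (Cadd Cone (Copp Cone)) with Czero by Cring.
    apply hscal_0s. }
  transitivity (hadd (hopp y) (hadd y (hscal (Copp Cone) y))).
  - rewrite Hy, hadd_0. reflexivity.
  - rewrite hadd_assoc, (hadd_comm _ (hopp y) y), hadd_opp, hadd_0l. reflexivity.
Qed.

Lemma hsub_eq_add (x y z : H) : hsub x y = z <-> x = hadd z y.
Proof.
  unfold hsub; split; intro E; subst.
  - rewrite <- hadd_assoc, (hadd_comm _ (hopp y) y), hadd_opp, hadd_0. reflexivity.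
  - rewrite <- hadd_assoc, hadd_opp, hadd_0. reflexivity.
Qed.

Lemma hadd_add_swap (a b c d : H) :
  hadd (hadd a b) (hadd c d) = hadd (hadd a c) (hadd b d).
Proof.
  rewrite <- !hadd_assoc. f_equal. rewrite !hadd_assoc. f_equal. apply hadd_comm.
Qed.

End VectorAlgebra.

Section LinearOperators.
Context {H : Hilbert} (T : operator H) (LT : linear_op T).

Lemma dom_zero : dom T hzero.
Proof. destruct LT as [[? _] _]; assumption. Qed.

Lemma dom_add (x y : H) : dom T x -> dom T y -> dom T (hadd x y).
Proof. destruct LT as [[_ [? _]] _]; auto. Qed.

Lemma dom_scal (a : Cpx) (x : H) : dom T x -> dom T (hscal a x).
Proof. destruct LT as [[_ [_ ?]] _]; auto. Qed.

Lemma dom_sub (x y : H) : dom T x -> dom T y -> dom T (hsub x y).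
Proof. intros; rewrite hsub_scal; apply dom_add; auto; apply dom_scal; auto. Qed.

Lemma app_add (x y : H) : dom T x -> dom T y ->
  app T (hadd x y) = hadd (app T x) (app T y).
Proof. destruct LT as [_ [? _]]; auto. Qed.

Lemma app_scal (a : Cpx) (x : H) : dom T x -> app T (hscal a x) = hscal a (app T x).
Proof. destruct LT as [_ [_ ?]]; auto. Qed.

Lemma app_sub (x y : H) : dom T x -> dom T y ->
  app T (hsub x y) = hsub (app T x) (app T y).
Proof.
  intros. rewrite !hsub_scal, app_add, app_scal; auto. apply dom_scal; auto.
Qed.

Definition shift (l : Cpx) (x : H) : H := hsub (app T x) (hscal l x).

Lemma app_zero : app T hzero = hzero.
Proof.
  rewrite <- (hscal_0s (@hzero H)) at 1.
  rewrite app_scal by apply dom_zero. apply hscal_0s.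
Qed.

Lemma shift_zero (l : Cpx) : shift l hzero = hzero.
Proof.
  unfold shift. rewrite app_zero, hsub_scal, !hscal_0v, hadd_0. reflexivity.
Qed.

Lemma shift_add (l : Cpx) (x y : H) : dom T x -> dom T y ->
  shift l (hadd x y) = hadd (shift l x) (shift l y).
Proof.
  intros. unfold shift. rewrite app_add by auto.
  rewrite !hsub_scal, !hscal_addv. apply hadd_add_swap.
Qed.

Lemma shift_scal (l a : Cpx) (x : H) : dom T x ->
  shift l (hscal a x) = hscal a (shift l x).
Proof.
  intros. unfold shift. rewrite app_scal by auto.
  rewrite !hsub_scal, hscal_addv, !hscal_assoc.
  f_equal. f_equal. Cring.
Qed.

Lemma subspace_shift_image (l : Cpx) (S : H -> Prop) :
  subspace S -> (forall f, S f -> dom T f) -> subspace (shift_image T l S).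
Proof.
  intros [S0 [Sadd Sscal]] SD. split; [|split].
  - exists hzero. split; auto. symmetry. apply shift_zero.
  - intros x y [f1 [S1 ->]] [f2 [S2 ->]]. exists (hadd f1 f2). split; auto.
    symmetry. apply shift_add; auto.
  - intros a x [f [Sf ->]]. exists (hscal a f). split; auto.
    symmetry. apply shift_scal; auto.
Qed.

End LinearOperators.

Section Resolvents.
Context {H : Hilbert} (T : operator H) (LT : linear_op T).

Lemma resolvent_spec (l : Cpx) (g : H) : in_resolvent_set T l ->
  dom T (resolvent T l g) /\ shift T l (resolvent T l g) = g.
Proof.
  intros [_ [Hsurj _]]. unfold resolvent. apply epsilon_spec. exact (Hsurj g).
Qed.

Lemma resolvent_unique (l : Cpx) (f g : H) : in_resolvent_set T l ->
  dom T f -> shift T l f = g -> resolvent T l g = f.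
Proof.
  intros RS Df Sf. destruct (resolvent_spec l g RS) as [Dr Sr].
  destruct RS as [Hinj _]. apply Hinj; auto. unfold shift in *. rewrite Sr, Sf. reflexivity.
Qed.

Lemma resolvent_char (l : Cpx) (f g : H) : in_resolvent_set T l ->
  resolvent T l g = f <-> dom T f /\ shift T l f = g.
Proof.
  intro RS. split.
  - intros <-. apply resolvent_spec; assumption.
  - intros [Df Sf]. apply resolvent_unique; assumption.
Qed.

Lemma app_resolvent (l : Cpx) (g : H) : in_resolvent_set T l ->
  app T (resolvent T l g) = hadd g (hscal l (resolvent T l g)).
Proof.
  intro RS. apply hsub_eq_add. apply (resolvent_spec l g RS).
Qed.

Lemma resolvent_add (l : Cpx) (g1 g2 : H) : in_resolvent_set T l ->
  resolvent T l (hadd g1 g2) = hadd (resolvent T l g1) (resolvent T l g2).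
Proof.
  intro RS. destruct (resolvent_spec l g1 RS) as [D1 S1].
  destruct (resolvent_spec l g2 RS) as [D2 S2].
  apply resolvent_unique; auto using dom_add.
  rewrite shift_add, S1, S2; auto.
Qed.

Lemma resolvent_scal (l a : Cpx) (g : H) : in_resolvent_set T l ->
  resolvent T l (hscal a g) = hscal a (resolvent T l g).
Proof.
  intro RS. destruct (resolvent_spec l g RS) as [D1 S1].
  apply resolvent_unique; auto using dom_scal.
  rewrite shift_scal, S1; auto.
Qed.

Lemma resolvent_lincomb (l a b : Cpx) (x y : H) : in_resolvent_set T l ->
  hadd (hscal a (resolvent T l x)) (hscal b (resolvent T l y)) =
  resolvent T l (hadd (hscal a x) (hscal b y)).
Proof.
  intro RS. rewrite resolvent_add, !resolvent_scal; auto.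
Qed.

Lemma resolvent_identity (l l' : Cpx) (g : H) :
  in_resolvent_set T l -> in_resolvent_set T l' ->
  resolvent T l' g =
  hadd (resolvent T l g) (hscal (Csub l' l) (resolvent T l' (resolvent T l g))).
Proof.
  intros RS RS'.
  destruct (resolvent_spec l g RS) as [Dp Sp].
  destruct (resolvent_spec l' (resolvent T l g) RS') as [DY SY].
  apply resolvent_unique; auto using dom_add, dom_scal.
  rewrite shift_add, shift_scal, SY; auto using dom_scal.
  unfold shift at 1. rewrite (app_resolvent l g RS).
  rewrite hsub_scal, hscal_assoc, <- !hadd_assoc, <- !hscal_adds.
  replace (Cadd l (Cadd (Cmul (Copp Cone) l') (Csub l' l))) with Czero by Cring.
  rewrite hscal_0s, hadd_0. reflexivity.
Qed.

End Resolvents.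

(* The scalar bookkeeping behind (iii)/(iv): with c = mu lambda q (q - 1)
   = q mu (lambda q - lambda),
   q X + c Y + mu q p = q (X + mu (p + (lambda q - lambda) Y)). *)
Lemma star2_rearrange {H : Hilbert} (q l m : Cpx) (X p Y : H) :
  hadd (hadd (hscal q X) (hscal (Cmul (Cmul (Cmul m l) q) (Csub q Cone)) Y))
       (hscal (Cmul m q) p) =
  hscal q (hadd X (hscal m (hadd p (hscal (Csub (Cmul l q) l) Y)))).
Proof.
  repeat first [rewrite hscal_addv | rewrite hscal_assoc].
  rewrite <- hadd_assoc. f_equal. rewrite hadd_comm. f_equal; f_equal; Cring.
Qed.

Section TwistedCommutation.
Context {H : Hilbert} (A B : operator H) (LA : linear_op A) (LB : linear_op B).
Context (q l : Cpx) (hl : in_resolvent_set A l) (hlq : in_resolvent_set A (Cmul l q)).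

(* (i): if A B f = q B A f for an f in D(AB) and D(BA), and q is invertible,
   then (star) holds for g = (A - lambda) f, since R_lambda(A) g = f and
   (A - lambda q) (q^-1 B f) = B g. *)
Lemma commutation_to_star (q' : Cpx) (f : H) : Cmul q q' = Cone ->
  dom_comp A B f -> dom_comp B A f ->
  app A (app B f) = hscal q (app B (app A f)) ->
  rel_star A B q l (shift A l f).
Proof.
  intros qinv [DBf DABf] [DAf DBAf] Hcomm.
  assert (Rf : resolvent A l (shift A l f) = f) by (apply resolvent_unique; auto).
  assert (RBg : resolvent A (Cmul l q) (app B (shift A l f)) = hscal q' (app B f)).
  { apply resolvent_unique; auto using dom_scal.
    unfold shift. rewrite app_scal, Hcomm, app_sub, app_scal, !hscal_assoc;
      auto using dom_scal.
    replace (Cmul q' q) with Cone by (rewrite <- qinv; Cring).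
    replace (Cmul (Cmul l q) q') with l
      by (transitivity (Cmul l (Cmul q q')); [rewrite qinv | ]; Cring).
    rewrite hscal_1. reflexivity. }
  unfold rel_star. rewrite Rf, RBg, hscal_assoc, qinv, hscal_1. auto.
Qed.

(* (ii): conversely, (star) for g in D(B) yields the commutation relation for
   f = R_lambda(A) g, using A f = g + lambda f and
   A (q R_{lambda q}(A) B g) = q (B g + lambda q R_{lambda q}(A) B g). *)
Lemma star_to_commutation (g : H) : dom B g -> rel_star A B q l g ->
  dom_comp A B (resolvent A l g) /\ dom_comp B A (resolvent A l g) /\
  app A (app B (resolvent A l g)) = hscal q (app B (app A (resolvent A l g))).
Proof.
  intros DBg [DBf BF].
  destruct (resolvent_spec A l g hl) as [DAf _].
  destruct (resolvent_spec A (Cmul l q) (app B g) hlq) as [DAk _].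
  pose proof (app_resolvent A l g hl) as Af.
  pose proof (app_resolvent A (Cmul l q) (app B g) hlq) as Ak.
  split; [|split].
  - split; auto. rewrite BF. apply dom_scal; auto.
  - split; auto. rewrite Af. apply dom_add; auto. apply dom_scal; auto.
  - rewrite BF, app_scal, Ak, Af, app_add, app_scal, BF, hscal_assoc; auto.
    apply dom_scal; auto.
Qed.

Context (m : Cpx) (hm : in_resolvent_set B m) (hmq : in_resolvent_set B (Cmul m q)).

Lemma star_iff_star2 (h : H) :
  rel_star A B q l (resolvent B m h) <-> rel_star2 A B q l m h.
Proof.
  set (g := resolvent B m h).
  set (p := resolvent A l g).
  set (c := Cmul (Cmul (Cmul m l) q) (Csub q Cone)).
  set (Z := hadd (hscal q (resolvent A (Cmul l q) h))
                 (hscal c (resolvent A (Cmul l q) p))).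
  assert (Hrhs : hadd Z (hscal (Cmul m q) p) =
                 hscal q (resolvent A (Cmul l q) (app B g))).
  { unfold g; rewrite (app_resolvent B m h hm); fold g.
    rewrite resolvent_add, resolvent_scal by auto.
    rewrite (resolvent_identity A LA l (Cmul l q) g) by auto; fold p.
    apply star2_rearrange. }
  unfold rel_star2, rel_star; fold g p.
  rewrite resolvent_lincomb by auto. fold c Z.
  rewrite <- Hrhs, <- hsub_eq_add. fold (shift B (Cmul m q) p).
  split.
  - intros Hp. symmetry. apply resolvent_char; auto.
  - intros Ep. apply resolvent_char; [exact hmq | symmetry; exact Ep].
Qed.

End TwistedCommutation.

Theorem mainTheorem1 (H : Hilbert) (q l m : Cpx) (A B : operator H)
  (hq : Cabs q = 1%R) (hq2 : Cmul q q <> Cone)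
  (hA : self_adjoint A) (hB : self_adjoint B)
  (hl : in_resolvent_set A l) (hlq : in_resolvent_set A (Cmul l q))
  (hm : in_resolvent_set B m) (hmq : in_resolvent_set B (Cmul m q)) :
  (* (i) *)
  (forall D : H -> Prop, subspace D ->
     (forall f, D f -> dom_comp A B f /\ dom_comp B A f) ->
     (forall f, D f -> app A (app B f) = hscal q (app B (app A f))) ->
     subspace (shift_image A l D) /\
     (forall g, shift_image A l D g -> dom B g) /\
     (forall g, shift_image A l D g -> rel_star A B q l g)) /\
  (* (ii) *)
  (forall E : H -> Prop, subspace E -> (forall g, E g -> dom B g) ->
     (forall g, E g -> rel_star A B q l g) ->
     forall f, resolvent_image A l E f ->
       dom_comp A B f /\ dom_comp B A f /\
       app A (app B f) = hscal q (app B (app A f))) /\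
  (* (iii) *)
  (forall E : H -> Prop, subspace E -> (forall g, E g -> dom B g) ->
     (forall g, E g -> rel_star A B q l g) ->
     forall h, shift_image B m E h -> rel_star2 A B q l m h) /\
  (* (iv) *)
  (forall F : H -> Prop, subspace F ->
     (forall h, F h -> rel_star2 A B q l m h) ->
     forall g, resolvent_image B m F g -> rel_star A B q l g).
Proof.
  destruct hA as [LA _], hB as [LB _].
  pose proof (Cmul_conj_unit q hq) as qinv.
  split; [|split; [|split]].
  - intros D HD Hdom Hcomm.
    assert (DA : forall f, D f -> dom A f) by (intros f Df; apply (Hdom f Df)).
    split; [|split].
    + apply subspace_shift_image; auto.
    + intros g [f [Df ->]]. destruct (Hdom f Df) as [[DBf _] [_ DBAf]].
      apply dom_sub; auto using dom_scal.
    + intros g [f [Df ->]]. destruct (Hdom f Df) as [DABf DBAf].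
      apply (commutation_to_star A B LA LB q l hl hlq (Cconj q)); auto.
  - intros E _ HEB HEs f [g [Eg ->]].
    apply star_to_commutation; auto.
  - intros E _ HEB HEs h [g [Eg Eh]].
    assert (Rh : resolvent B m h = g) by (apply resolvent_char; auto).
    apply star_iff_star2; auto. rewrite Rh; auto.
  - intros F _ Hs g [h [Fh ->]].
    apply (star_iff_star2 A B LA LB q l hl hlq m hm hmq). auto.
Qed.
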